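(* Let $R,S,T\in\mathcal{L}$ with $R\le_\ell T$ and let $\epsilon\ge0$. If there exist nonzero morphisms $k_R\to k_S(\epsilon)$ and $k_S\to k_T(\epsilon)$, then $k_S$ is $\Lambda_\epsilon$-interleaved with $k_R$ or with $k_T$.
   Context: Let $k$ be a field. The bipath poset $B$ has underlying set $(\mathbb{R}\times\{1,2\})\sqcup\{-\infty,+\infty\}$. Its order is: $x\le y$ iff $x=-\infty$, or $y=+\infty$, or $x=(s,i)$, $y=(t,i)$ with the same $i$ and $s\le t$. An interval is a nonempty convex and connected subset. $k_I$ is the interval module (functor $B\to$ $k$-vector spaces, $k$ on $I$ and $0$ elsewhere, identity maps within $I$, zero maps otherwise). For $\epsilon\ge0$, $\Lambda_\epsilon$ sends $(r,i)\mapsto(r+\epsilon,i)$ and fixes $\pm\infty$. Then: - $V(\epsilon)_b=V_{\Lambda_\epsilon b}$ and $V(\epsilon)(b,b')=V(\Lambda_\epsilon b,\Lambda_\epsilon b')$; $\phi(\epsilon)$ has components $\phi_{\Lambda_\epsilon b}$; - $V_{0\to\epsilon}$ has components $V(b,\Lambda_\epsilon b)$; - $V,W$ are $\Lambda_\epsilon$-interleaved if there are $\alpha\colon V\to W(\epsilon)$, $\beta\colon W\to V(\epsilon)$ with $\beta(\epsilon)\alpha=V_{0\to2\epsilon}$ and $\alpha(\epsilon)\beta=W_{0\to2\epsilon}$. Decorated numbers: $\overline{\mathbb{R}}^*=\{r^+,r^-: r\in\mathbb{R}\cup\{\pm\infty\}\}$ with total order $s^\sigma\le_* t^\tau$ iff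 $s<t$, or $s=t$ and $(\sigma,\tau)\in\{(-,-),(-,+),(+,+)\}$. Let $\mathbb{R}^*=\{r^\pm:r\in\mathbb{R}\}$. For $s^\sigma,t^\tau\in\mathbb{R}^*$, $s^\sigma+t^\tau$ is $(s+t)^+$ if $\sigma=\tau=+$ and $(s+t)^-$ otherwise. $\mathcal{L}$ is the set of intervals $\neq B$ containing $-\infty$. Each is uniquely $$\langle s^\sigma,t^\tau\rangle_{\mathcal{L}}=\{-\infty\}\cup\{(r,1):r^+\le_* t^\tau\}\cup\{(r,2):r^+\le_* s^\sigma\}$$ with $s^\sigma,t^\tau\in\mathbb{R}^*\cup\{-\infty^+,+\infty^-\}$. Partition of $\mathcal{L}$: - $\mathcal{L}_1$: both entries $-\infty^+$; - $\mathcal{L}_2$: exactly one entry $-\infty^+$, the other in $\mathbb{R}^*\cup\{+\infty^-\}$; - $\mathcal{L}_3$: both entries in $\mathbb{R}^*$; - $\mathcal{L}_4$: exactly one entry $+\infty^-$, the other in $\mathbb{R}^*$; - $\mathcal{L}_5$: both entries $+\infty^-$. Define $\ell$ by $\ell=-\infty^-$ on $\mathcal{L}_1$, $\max\{s^\sigma,t^\tau\}$ on $\mathcal{L}_2$, $s^\sigma+t^\tau$ on $\mathcal{L}_3$, $\min\{s^\sigma,t^\tau\}$ on $\mathcal{L}_4$, and $+\infty^-$ on $\mathcal{L}_5$. Set $I\le_\ell J$ iff either $I\in\mathcal{L}_i$, $J\in\mathcal{L}_j$ with $i<j$, or $I,J$ lie in the same $\mathcal{L}_i$ and $\ell(I)\le_*\ell(J)$.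 *)

From HB Require Import structures.
From mathcomp Require Import all_boot all_order all_algebra.
From mathcomp Require Import reals.
Set Implicit Arguments. Unset Strict Implicit. Unset Printing Implicit Defensive.
Import Order.TTheory GRing.Theory Num.Theory.
Local Open Scope ring_scope.

Section Bipath.
Variable R : realType.

Inductive lab := L1 | L2.

Inductive B := Minf | Pinf | Pt of R & lab.

Definition lab_eqb (i j : lab) : bool :=
  match i, j with L1, L1 | L2, L2 => true | _, _ => false end.

Definition leB (x y : B) : bool :=
  match x, y with
  | Minf, _ => true
  | _, Pinf => true
  | Pt s i, Pt t j => lab_eqb i j && (s <= t)
  | _, _ => false
  end.

Definition comparableB (x y : B) : bool := leB x y || leB y x.

Definition convexB (I : pred B) : Prop :=
  forall x y z, I x -> I z -> leB x y -> leB y z -> I y.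

Definition connectedB (I : pred B) : Prop :=
  forall x y, I x -> I y ->
  exists (n : nat) (f : nat -> B), f 0%N = x /\ f n = y /\
    (forall i, (i <= n)%N -> I (f i)) /\
    (forall i, (i < n)%N -> comparableB (f i) (f i.+1)).

Definition is_interval (I : pred B) : Prop :=
  (exists x, I x) /\ convexB I /\ connectedB I.

Definition inL (I : pred B) : Prop :=
  is_interval I /\ ~ (forall b, I b) /\ I Minf.

(** Decorated numbers: an extended real with a decoration (true = +, false = -). *)
Inductive xreal := XNinf | XFin of R | XPinf.
Definition deco := (xreal * bool)%type.

Definition xlt (s t : xreal) : bool :=
  match s, t with
  | XNinf, XNinf => false
  | XNinf, _ => true
  | XFin a, XFin b => a < b
  | XFin _, XPinf => true
  | _, _ => false
  end.

Definition xeq (s t : xreal) : bool :=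
  match s, t with
  | XNinf, XNinf | XPinf, XPinf => true
  | XFin a, XFin b => a == b
  | _, _ => false
  end.

Definition le_star (p q : deco) : bool :=
  xlt p.1 q.1 || (xeq p.1 q.1 && (p.2 ==> q.2)).

Definition param_ok (p : deco) : bool :=
  match p with
  | (XFin _, _) => true
  | (XNinf, true) => true
  | (XPinf, false) => true
  | _ => false
  end.

Definition lint (s t : deco) : pred B := fun b =>
  match b with
  | Minf => true
  | Pinf => false
  | Pt r L1 => le_star (XFin r, true) t
  | Pt r L2 => le_star (XFin r, true) s
  end.

Definition kind (p : deco) : nat :=
  match p.1 with XNinf => 0 | XFin _ => 1 | XPinf => 2 end.

(** Index i of the class L_i containing <s,t>_L. *)
Definition Lclass (s t : deco) : nat :=
  match kind s, kind t with
  | 0, 0 => 1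
  | 0, _ | _, 0 => 2
  | 1, 1 => 3
  | 2, 2 => 5
  | _, _ => 4
  end%N.

Definition dmax (p q : deco) : deco := if le_star p q then q else p.
Definition dmin (p q : deco) : deco := if le_star p q then p else q.

Definition dadd (p q : deco) : deco :=
  match p.1, q.1 with
  | XFin a, XFin b => (XFin (a + b), p.2 && q.2)
  | _, _ => (XNinf, false) (* not used: only applied on L_3 *)
  end.

Definition ell (s t : deco) : deco :=
  match Lclass s t with
  | 1 => (XNinf, false)
  | 2 => dmax s t
  | 3 => dadd s t
  | 4 => dmin s t
  | _ => (XPinf, false)
  end%N.

Definition le_ell_param (s t s' t' : deco) : bool :=
  (Lclass s t < Lclass s' t')%N ||
  ((Lclass s t == Lclass s' t') && le_star (ell s t) (ell s' t')).

(** I <=_ell J, via the unique parametrisations of I, J in L. *)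
Definition le_ell (I J : pred B) : Prop :=
  exists s t s' t' : deco,
    [/\ param_ok s, param_ok t, param_ok s' & param_ok t'] /\
    I =1 lint s t /\ J =1 lint s' t' /\ le_ell_param s t s' t'.

Definition Lam (e : R) (b : B) : B :=
  match b with Pt r i => Pt (r + e) i | x => x end.

Lemma Lam_comp (e : R) (b : B) : Lam e (Lam e b) = Lam (e + e) b.
Proof. by case: b => //= r i; rewrite addrA. Qed.

Variable k : fieldType.

(** Pointwise finite-dimensional persistence modules over B:
    V_b = k^(pdim b) (row vectors), V(b,b') given by a matrix acting on the
    right (v |-> v *m pmap b b'); only relevant for b <= b'. *)
Record pmod := PMod {
  pdim : B -> nat;
  pmap : forall b b', 'M[k]_(pdim b, pdim b')
}.

Definition is_morph (V W : pmod) (f : forall b, 'M[k]_(pdim V b, pdim W b)) : Prop :=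
  forall b b', leB b b' -> pmap V b b' *m f b' = f b *m pmap W b b'.

Definition nonzero_morph_exists (V W : pmod) : Prop :=
  exists f : forall b, 'M[k]_(pdim V b, pdim W b),
    is_morph f /\ exists b, f b != 0.

Definition imod (I : pred B) : pmod :=
  @PMod (fun b => nat_of_bool (I b))
        (fun b b' => if I b && I b' then const_mx 1 else 0).

Definition shift (e : R) (V : pmod) : pmod :=
  @PMod (fun b => pdim V (Lam e b)) (fun b b' => pmap V (Lam e b) (Lam e b')).

(** Lambda_eps-interleaving.  The component of V_{0 -> 2 eps} at b is
    V(b, Lambda_{2eps} b) = V(b, Lambda_eps (Lambda_eps b)) (see Lam_comp). *)
Definition interleaved (e : R) (V W : pmod) : Prop :=
  exists (alpha : forall b, 'M[k]_(pdim V b, pdim W (Lam e b)))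
         (beta : forall b, 'M[k]_(pdim W b, pdim V (Lam e b))),
    @is_morph V (shift e W) alpha /\ @is_morph W (shift e V) beta /\
    (forall b, alpha b *m beta (Lam e b) = pmap V b (Lam e (Lam e b))) /\
    (forall b, beta b *m alpha (Lam e b) = pmap W b (Lam e (Lam e b))).

End Bipath.

(* A nonzero morphism k_I -> k_J(eps) between intervals containing -oo forces
   every b with Lambda_eps b in J to lie in I, and two downsets related by such
   shifted inclusions in both directions are Lambda_eps-interleaved by the maps
   that are the identity wherever both modules are k.  So if k_S is interleaved
   neither with k_R nor with k_T, there are b notin S with Lambda_eps b in R and
   b' notin T with Lambda_eps b' in S.  If b and b' lie on the same line, T ends
   more than 2 eps before R on that line and at most 2 eps after R on the other
   one; if they lie on different lines, T ends strictly before R on both lines.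
   Either way T <_l R strictly, by a case analysis on the classes L_1..L_5. *)

From Pilot Require Import Defs.
From HB Require Import structures.
From mathcomp Require Import all_boot all_order all_algebra.
From mathcomp Require Import boolp reals lra.
Set Implicit Arguments. Unset Strict Implicit. Unset Printing Implicit Defensive.
Import Order.TTheory GRing.Theory Num.Theory.
Local Open Scope ring_scope.

Lemma lab_eqP : Equality.axiom lab_eqb.
Proof. by case=> [] []; constructor. Qed.

HB.instance Definition _ := hasDecEq.Build lab lab_eqP.

Section DecoratedParameters.
Variable R : realType.
Implicit Types (p q s t : deco R).

Lemma xlt_total (x y : xreal R) : [|| xlt x y, xeq x y | xlt y x].
Proof. by case: x y => [|a|] [|b|] //=; case: ltgtP. Qed.

Lemma xeqC (x y : xreal R) : xeq x y = xeq y x.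
Proof. by case: x y => [|a|] [|b|] //=; rewrite eq_sym. Qed.

Lemma le_star_total p q : le_star p q || le_star q p.
Proof.
case: p q => [x sx] [y sy]; rewrite /le_star /= (xeqC y x).
by case/or3P: (xlt_total x y) => ->; rewrite ?orbT //; case: sx sy => [] []; rewrite ?orbT.
Qed.

Lemma le_star_anti p q : le_star p q -> le_star q p -> p = q.
Proof.
case: p q => [[|a|] sa] [[|b|] sb]; rewrite /le_star //=.
all: by case: sa sb => [] [] //=; case: ltgtP => // ->.
Qed.

Lemma if_le_starC (T : Type) p q (a b : T) :
  (p = q -> a = b) -> (if le_star p q then a else b) = (if le_star q p then b else a).
Proof.
case pq: (le_star p q); case qp: (le_star q p) => // eq_ab; first exact/eq_ab/le_star_anti.
by move: (le_star_total p q); rewrite pq qp.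
Qed.

Lemma dmaxC p q : dmax p q = dmax q p.
Proof. by rewrite /dmax; apply: if_le_starC => ->. Qed.

Lemma dminC p q : dmin p q = dmin q p.
Proof. by rewrite /dmin; apply: if_le_starC => ->. Qed.

Lemma daddC p q : dadd p q = dadd q p.
Proof. by case: p q => [[|a|] sa] [[|b|] sb] //; rewrite /dadd /= addrC andbC. Qed.

Lemma LclassC s t : Lclass s t = Lclass t s.
Proof. by rewrite /Lclass; case: (kind s) (kind t) => [|[|[|?]]] [|[|[|?]]]. Qed.

Lemma ellC s t : ell s t = ell t s.
Proof. by rewrite /ell LclassC dmaxC daddC dminC. Qed.

Lemma le_ell_paramC s t s' t' : le_ell_param s t s' t' = le_ell_param t s t' s'.
Proof. by rewrite /le_ell_param LclassC (LclassC s') ellC (ellC s'). Qed.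

Definition ray p : pred R := fun r => le_star (XFin r, true) p.

Definition xle_shift (c a : deco R) (d : R) : bool :=
  match c.1, a.1 with
  | XNinf, _ | XFin _, XPinf | XPinf, XPinf => true
  | XFin w, XFin v => w <= v + d
  | _, _ => false
  end.

Local Ltac params_brute s t s' t' :=
  case: s => [[|?|] []] //; case: t => [[|?|] []] //;
  case: s' => [[|?|] []] //; case: t' => [[|?|] []] //;
  rewrite /ray /xle_shift /le_ell_param /ell /Lclass /kind /dmax /dmin /dadd /le_star /xlt /xeq /=;
  move=> *; lra.

Lemma lt_ell_of_strict_rays s t s' t' (u v : R) :
  param_ok s -> param_ok t -> param_ok s' -> param_ok t' ->
  ray s u -> ~~ ray s' u -> ray t v -> ~~ ray t' v ->
  ~~ le_ell_param s t s' t'.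
Proof. params_brute s t s' t'. Qed.

Lemma lt_ell_of_gap_xle s t s' t' (d u y : R) :
  param_ok s -> param_ok t -> param_ok s' -> param_ok t' -> 0 <= d ->
  ray t u -> ~~ ray t' y -> y + d < u -> xle_shift s' s d ->
  ~~ le_ell_param s t s' t'.
Proof. params_brute s t s' t'. Qed.

Lemma xle_shift_of_ray_incl (a c : deco R) (d : R) :
  param_ok a -> param_ok c -> (forall r, ray c (r + d) -> ray a r) -> xle_shift c a d.
Proof.
case: a c => [[|v|] sa] [[|w|] sc] //=; case: sa => //; case: sc => // _ _ incl;
  rewrite /xle_shift /=.
all: first
  [ by move: (incl (w - d - 1)); rewrite /ray /le_star /=; lra
  | by move: (incl ((v + w - d) / 2)); rewrite /ray /le_star /=; lra
  | by move: (incl (v + 1)); rewrite /ray /le_star /=; lra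
  | exact: incl 0 isT ].
Qed.

Definition line (s t : deco R) (l : lab) : deco R := if l is L1 then t else s.

Lemma lt_ell_of_strict_lines s t s' t' i j (u v : R) :
  param_ok s -> param_ok t -> param_ok s' -> param_ok t' -> i != j ->
  ray (line s t i) u -> ~~ ray (line s' t' i) u ->
  ray (line s t j) v -> ~~ ray (line s' t' j) v ->
  ~~ le_ell_param s t s' t'.
Proof.
move=> ps pt ps' pt'; case: i j => [] [] //= _ *.
  exact: (lt_ell_of_strict_rays (u := v) (v := u)).
exact: (lt_ell_of_strict_rays (u := u) (v := v)).
Qed.

Lemma lt_ell_of_gap_lines s t s' t' i j (d u y : R) :
  param_ok s -> param_ok t -> param_ok s' -> param_ok t' -> 0 <= d -> i != j ->
  ray (line s t i) u -> ~~ ray (line s' t' i) y -> y + d < u ->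
  (forall r, ray (line s' t' j) (r + d) -> ray (line s t j) r) ->
  ~~ le_ell_param s t s' t'.
Proof.
move=> ps pt ps' pt' d0; case: i j => [] [] //= _ tu t'y yu incl; [|rewrite le_ell_paramC];
  exact: (lt_ell_of_gap_xle _ _ _ _ d0 tu t'y yu (xle_shift_of_ray_incl _ _ incl)).
Qed.

End DecoratedParameters.

Section Intervals.
Variable R : realType.
Implicit Types (I J : pred (B R)) (e : R).

Definition down_closed I := forall x y, leB x y -> I y -> I x.

Lemma leB_Lam e x y : leB x y -> leB (Lam e x) (Lam e y).
Proof. by case: x y => [||r i] [||r' j] //= /andP[-> ?]; rewrite lerD2r. Qed.

Lemma inL_down_closed I : inL I -> down_closed I.
Proof. by case=> [[_ [cvx _]] [_ IM]] x y le_xy Iy; apply: (cvx (Minf R) x y). Qed.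

Lemma inL_Pinf I : inL I -> ~~ I (Pinf R).
Proof.
case=> [[_ [cvx _]] [nB IM]]; apply/negP => IP; apply: nB => b.
by apply: (cvx (Minf R) b (Pinf R)) => //; case: b.
Qed.

Lemma inL_gap_Pt I J e b :
  inL I -> inL J -> J (Lam e b) -> ~~ I b -> exists x l, b = Pt x l.
Proof.
move=> hI hJ; case: b => [||x l] /=; last by exists x, l.
  by rewrite hI.2.2.
by rewrite (negPf (inL_Pinf hJ)).
Qed.

Lemma lint_Pt (s t : deco R) (r : R) l : lint s t (Pt r l) = ray (line s t l) r.
Proof. by case: l. Qed.

Lemma not_le_ell_of_gaps IR IS IT e b b' :
  inL IR -> inL IS -> inL IT -> 0 <= e ->
  (forall b, IS (Lam e b) -> IR b) -> (forall b, IT (Lam e b) -> IS b) ->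
  IR (Lam e b) -> ~~ IS b -> IS (Lam e b') -> ~~ IT b' ->
  ~ le_ell IR IT.
Proof.
move=> hR hS hT e0 SR TS Rb nSb Sb' nTb'.
have [x [i def_b]] := inL_gap_Pt hS hR Rb nSb; subst b.
have [y [j def_b']] := inL_gap_Pt hT hS Sb' nTb'; subst b'.
case=> [s [t [s' [t' [[ps pt ps' pt'] [ER [ET]]]]]]]; apply/negP.
move: Rb nTb' => /=; rewrite ER ET !lint_Pt => Rxe nTy.
have [eq_ij | neq_ij] := eqVneq i j.
- subst j; have yex : y + e < x.
    rewrite ltNge; apply/negP => le_xye; move/negP: nSb; apply.
    apply: (inL_down_closed hS _ Sb').
    by rewrite /= le_xye andbT; case: (i).
  have [j neq_ij] : exists j, i != j by case: (i); [exists L2 | exists L1].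
  have ee0 : 0 <= e + e by lra.
  have yeex : y + (e + e) < x + e by lra.
  apply: (lt_ell_of_gap_lines ps pt ps' pt' ee0 neq_ij Rxe nTy yeex) => r.
  rewrite -!lint_Pt -ER -ET => Tr.
  by apply: (SR (Pt r j)); apply: (TS (Pt (r + e) j)); rewrite /= -addrA.
- apply: (lt_ell_of_strict_lines ps pt ps' pt' neq_ij Rxe _ _ nTy).
    by rewrite -lint_Pt -ET; apply: contra nSb => Txe; apply: (TS (Pt x i)).
  by rewrite -lint_Pt -ER; apply: (SR (Pt y j)).
Qed.

End Intervals.

Section BoolMatrices.
Variable k : fieldType.
Implicit Types X Y Z c : bool.

Definition bool_mx X Y c : 'M[k]_(X, Y) := if c then const_mx 1 else 0.

Lemma bool_mx_mul X Y Z c1 c2 :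
  bool_mx X Y c1 *m bool_mx Y Z c2 = bool_mx X Z [&& c1, c2 & Y].
Proof.
case: c1 c2 => [] []; rewrite /bool_mx ?mul0mx ?mulmx0 ?andbF //.
by apply/matrixP => i j; rewrite !mxE; case: Y => /=; rewrite ?big_ord1 ?big_ord0 !mxE ?mulr1.
Qed.

Lemma eq_bool_mx X Y c1 c2 : (X -> Y -> c1 = c2) -> bool_mx X Y c1 = bool_mx X Y c2.
Proof. by case: X Y => [] [] => [->|_|_|_] //; rewrite ?flatmx0 ?thinmx0. Qed.

Lemma mulmx_thin_bool m n X (A : 'M[k]_(m, X)) (B : 'M_(X, n)) : ~~ X -> A *m B = 0.
Proof. by case: X A B => // A B _; rewrite thinmx0 mul0mx. Qed.

Lemma mx_neq0_rows X n (A : 'M[k]_(X, n)) : A != 0 -> X.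
Proof. by case: X A => // A; rewrite flatmx0 eqxx. Qed.

Lemma bool_mx11 : bool_mx true true true = 1%:M.
Proof. by apply/matrixP => i j; rewrite !ord1 !mxE. Qed.

Lemma mulmx_bool_mx_eq0 m X Y c (A : 'M[k]_(m, X)) :
  X -> Y -> c -> A *m bool_mx X Y c = 0 -> A = 0.
Proof.
by case: X A => // A _; case: Y => // _ ->; rewrite bool_mx11 mulmx1.
Qed.

Lemma bool_mx_mul_eq0 n X Y c (A : 'M[k]_(Y, n)) :
  X -> Y -> c -> bool_mx X Y c *m A = 0 -> A = 0.
Proof.
by case: X => // _; case: Y A => // A _ ->; rewrite bool_mx11 mul1mx.
Qed.

End BoolMatrices.

Section IntervalModules.
Variables (R : realType) (k : fieldType).
Implicit Types (I J V W : pred (B R)) (e : R).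

Lemma pmap_imod I b b' : Defs.pmap (imod k I) b b' = bool_mx k (I b) (I b') (I b && I b').
Proof. by []. Qed.

Lemma pmap_shift_imod I e b b' :
  Defs.pmap (shift e (imod k I)) b b' = Defs.pmap (imod k I) (Lam e b) (Lam e b').
Proof. by []. Qed.

Lemma is_morph_imod_shift V W e :
  down_closed W -> (forall b, W (Lam e b) -> V b) ->
  @is_morph R k (imod k V) (shift e (imod k W)) (fun b => bool_mx k _ _ true).
Proof.
move=> dW WV b b' le_bb'; rewrite pmap_shift_imod !pmap_imod !bool_mx_mul; apply: eq_bool_mx => _ Wb'.
by have Wb := dW _ _ (leB_Lam e le_bb') Wb'; rewrite Wb Wb' !WV.
Qed.

Lemma imod_interleaved V W e :
  down_closed V -> down_closed W ->
  (forall b, W (Lam e b) -> V b) -> (forall b, V (Lam e b) -> W b) ->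
  interleaved e (imod k V) (imod k W).
Proof.
move=> dV dW WV VW; exists (fun b => bool_mx k _ _ true), (fun b => bool_mx k _ _ true).
split; [exact: is_morph_imod_shift | split; [exact: is_morph_imod_shift | split]].
- by move=> b; rewrite pmap_imod bool_mx_mul; apply: eq_bool_mx => Vb VLLb; rewrite Vb VLLb VW.
- by move=> b; rewrite pmap_imod bool_mx_mul; apply: eq_bool_mx => Wb WLLb; rewrite Wb WLLb WV.
Qed.

Lemma nonzero_morph_imod_shift_incl I J e :
  I (Minf R) -> J (Minf R) -> nonzero_morph_exists (imod k I) (shift e (imod k J)) ->
  forall b, J (Lam e b) -> I b.
Proof.
move=> IM JM [f [nat_f [b0 nz_fb0]]] b JLb; apply/negPn/negP => nIb.
(* Naturality on -oo <= b kills f (-oo), as k_I vanishes at b; naturality on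
   -oo <= b0 then kills f b0. *)
have fM0 : f (Minf R) = 0.
  move: (nat_f (Minf R) b isT); rewrite pmap_shift_imod mulmx_thin_bool // => /esym.
  by rewrite pmap_imod; apply: mulmx_bool_mx_eq0; rewrite //= JM.
move: (nat_f (Minf R) b0 isT); rewrite pmap_imod fM0 mul0mx.
have Ib0 := mx_neq0_rows nz_fb0.
have IMb0 : I (Minf R) && I b0 by rewrite IM Ib0.
by move/(bool_mx_mul_eq0 IM Ib0 IMb0)/eqP; rewrite (negPf nz_fb0).
Qed.

End IntervalModules.

Theorem lemma4p14 (R : realType) (k : fieldType) (IR IS IT : pred (B R)) (e : R) :
  inL IR -> inL IS -> inL IT -> le_ell IR IT -> 0 <= e ->
  nonzero_morph_exists (imod k IR) (shift e (imod k IS)) ->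
  nonzero_morph_exists (imod k IS) (shift e (imod k IT)) ->
  interleaved e (imod k IS) (imod k IR) \/ interleaved e (imod k IS) (imod k IT).
Proof.
move=> hR hS hT le_RT e0 mRS mST.
have SR := nonzero_morph_imod_shift_incl hR.2.2 hS.2.2 mRS.
have TS := nonzero_morph_imod_shift_incl hS.2.2 hT.2.2 mST.
have [RS | /existsNP[b /not_implyP[Rb /negP nSb]]] := EM (forall b, IR (Lam e b) -> IS b).
  by left; apply: imod_interleaved => //; exact: inL_down_closed.
have [ST | /existsNP[b' /not_implyP[Sb' /negP nTb']]] := EM (forall b, IS (Lam e b) -> IT b).
  by right; apply: imod_interleaved => //; exact: inL_down_closed.
by case: (not_le_ell_of_gaps hR hS hT e0 SR TS Rb nSb Sb' nTb').
Qed.
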